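(* Let $\mathsf{K}$ be a finite simplicial complex with vertex set $P\subset\mathbb{R}^d$ and $p>0$, and let $\mathscr{M}$ and $\prec_\Omega$ be as constructed in the context; write the cycles of $\mathscr{M}$ as $\zeta_1\prec_\Omega\cdots\prec_\Omega\zeta_m$. Let $\zeta'_1,\dots,\zeta'_m$ be any $p$-cycles with $\operatorname{span}\{[\zeta'_1],\dots,[\zeta'_m]\}=H_p(\mathsf{K})$, indexed so that $r_P([\zeta'_i])<r_P([\zeta'_j])$ implies $i<j$. Then $r_P(\zeta_j)\le r_P([\zeta'_j])$ for all $1\le j\le m$.
   Context: All homology is with $\mathbb{Z}_2$ coefficients. For $v\in\mathbb{R}^d$ and a simplex $\sigma$, $r_v(\sigma)=\max_{x\text{ vertex of }\sigma}\|v-x\|_2$; for a nonzero chain $\zeta$, $r_v(\zeta)=\max_{\sigma\in\zeta}r_v(\sigma)$. Define $r_P(\zeta)=\min_{v\in P}r_v(\zeta)$ and $r_P([\zeta])=\min_{v\in P}\min_{\eta\in[\zeta]}r_v(\eta)$. For each $v\in P$, $\prec_v$ is a fixed total order on the simplices of $\mathsf{K}$ with $\sigma_1\prec_v\sigma_2$ whenever $\sigma_1$ is a proper face of $\sigma_2$ or $r_v(\sigma_1)<r_v(\sigma_2)$; for nonzero chains, $\zeta\prec_v\zeta'$ iff the $\prec_v$-largest simplex of $\zeta$ precedes that of $\zeta'$. $\mathcal{D}_v(\mathsf{K})$ is the simplexwise filtration adding simplices in $\prec_v$-order. Let $\zeta_{v,1}\prec_v\cdots\prec_v\zeta_{v,\beta}$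 be the essential $p$-cycles of $\mathcal{D}_v(\mathsf{K})$ computed by standard reduction (reduce the $\mathbb{Z}_2$ boundary matrix left to right by adding an earlier column with the same lowest-one row until all nonzero columns have distinct lowest ones, recording the column operations in $V$ starting from the identity; essential $p$-cycles are columns $V_i$ with $\sigma_i$ a $p$-simplex, reduced column $i$ zero, and $i$ not the lowest-one row of any nonzero reduced column). Let $\Omega=\{\zeta_{v,i}: v\in P,\ 1\le i\le\beta\}$, totally ordered by $\prec_\Omega$ so that $r_v(\zeta_{v,i})<r_{v'}(\zeta_{v',i'})$ implies $\zeta_{v,i}\prec_\Omega\zeta_{v',i'}$, and $\zeta_{v,i}\prec_v\zeta_{v,i'}$ implies $\zeta_{v,i}\prec_\Omega\zeta_{v,i'}$, with other ties broken arbitrarily. $\mathscr{M}$ is built by scanning $\Omega$ in $\prec_\Omega$-order, starting from $\mathscr{M}=\emptyset$, and adding a cycle $\zeta$ to $\mathscr{M}$ iff $[\zeta]$ is not in the span of the classes of the cycles already in $\mathscr{M}$. (Then $|\mathscr{M}|=m=\dim H_p(\mathsf{K})$.) *)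

(* Z_2 chains are represented as finite sets of simplices
   (addition = symmetric difference). *)
From HB Require Import structures.
From mathcomp Require Import all_boot all_order all_algebra.
From mathcomp Require Import reals.
Set Implicit Arguments. Unset Strict Implicit. Unset Printing Implicit Defensive.
Import Order.TTheory GRing.Theory Num.Theory.
Local Open Scope ring_scope.

Definition symd (T : finType) (A B : {set T}) : {set T} := (A :\: B) :|: (B :\: A).

Section Complex.
Variable V : finType.

Definition is_complex (K : {set {set V}}) : Prop :=
  [/\ set0 \notin K,
      (forall s t : {set V}, s \in K -> t \subset s -> t != set0 -> t \in K)
    & (forall x : V, [set x] \in K)].

Definition facet (a b : {set V}) : bool := (a \subset b) && (#|b| == #|a|.+1).

Definition bnd (c : {set {set V}}) : {set {set V}} :=
  [set t : {set V} | (t != set0) && odd #|[set s in c | facet t s]|].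

(* c is a p-chain of K (a p-simplex has p+1 vertices) *)
Definition pchain (K : {set {set V}}) (p : nat) (c : {set {set V}}) : bool :=
  c \subset [set s in K | #|s| == p.+1].

Definition pcycle (K : {set {set V}}) (p : nat) (c : {set {set V}}) : Prop :=
  pchain K p c /\ bnd c = set0.

Definition homologous (K : {set {set V}}) (p : nat) (z w : {set {set V}}) : bool :=
  [exists c : {set {set V}}, pchain K p.+1 c && (bnd c == symd z w)].

Definition sumch (L : seq {set {set V}}) : {set {set V}} := foldr (@symd _) set0 L.

Definition in_span (K : {set {set V}}) (p : nat) (z : {set {set V}})
  (L : seq {set {set V}}) : bool :=
  [exists b : (size L).-tuple bool, homologous K p z (sumch (mask b L))].

Section Reduction.
Variable s : seq {set V}.   (* the simplices listed in filtration order *)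
Variable p : nat.
Local Notation N := (size s).
Local Notation col := {set 'I_N}.

Definition bdcol (j : 'I_N) : col := [set i : 'I_N | facet (nth set0 s i) (nth set0 s j)].

(* lowest one (1 + row index), 0 for the zero column *)
Definition low (c : col) : nat := \big[maxn/0%N]_(i in c) (i : nat).+1.

(* reduce one column (pair R-column, V-column) against the earlier reduced columns;
   fuel N.+1 suffices since each addition strictly decreases the lowest one *)
Fixpoint red_col (fuel : nat) (prev : seq (col * col)) (RV : col * col) : col * col :=
  match fuel with
  | 0 => RV
  | fuel'.+1 =>
      let k := find (fun q : col * col => low q.1 == low RV.1) prev in
      if (low RV.1 != 0%N) && (k < size prev)%N then
        let q := nth (set0, set0) prev k in
        red_col fuel' prev (symd RV.1 q.1, symd RV.2 q.2)
      else RV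
  end.

(* reduced matrix R and column-operation matrix V, as lists of columns (R_j, V_j) *)
Definition reduction : seq (col * col) :=
  foldl (fun (prev : seq (col * col)) (j : 'I_N) => rcons prev (red_col N.+1 prev (bdcol j, [set j])))
        [::] (enum 'I_N).

Definition ess_idx : seq 'I_N :=
  [seq j : 'I_N <- enum 'I_N |
     [&& #|nth set0 s j| == p.+1,
         (nth (set0, set0) reduction j).1 == set0
       & ~~ has (fun q : col * col => low q.1 == (j : nat).+1) reduction]].

(* essential p-cycles, in increasing filtration order *)
Definition ess : seq {set {set V}} :=
  [seq [set nth set0 s (i : nat) | i : 'I_N in (nth (set0, set0) reduction j).2] | j : 'I_N <- ess_idx].
End Reduction.

Section Geometry.
Variable R : realType.
Variable d : nat.
Variable pt : V -> 'rV[R]_d.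

Definition dist (x y : 'rV[R]_d) : R :=
  Num.sqrt (\sum_(i < d) (x ord0 i - y ord0 i) ^+ 2).

(* r_v(sigma) and r_v(zeta) (distances are >= 0, so 0 is a neutral default) *)
Definition rs (v : V) (sg : {set V}) : R := \big[Num.max/0]_(x in sg) dist (pt v) (pt x).
Definition rc (v : V) (c : {set {set V}}) : R := \big[Num.max/0]_(sg in c) rs v sg.

Definition minseq (l : seq R) : R :=
  if l is x :: l' then foldr Num.min x l' else 0.

Definition rP (c : {set {set V}}) : R := minseq [seq rc v c | v <- enum V].

Definition rPcls (K : {set {set V}}) (p : nat) (z : {set {set V}}) : R :=
  minseq [seq rc v e | v <- enum V,
            e <- enum [set e : {set {set V}} | (e != set0) && homologous K p z e]].

(* ord v enumerates the simplices of K in a total order prec_v *)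
Definition valid_orders (K : {set {set V}}) (ord : V -> seq {set V}) : Prop :=
  forall v, [/\ uniq (ord v), (forall sg, (sg \in ord v) = (sg \in K))
     & (forall s1 s2, s1 \in K -> s2 \in K ->
          (s1 \proper s2) || (rs v s1 < rs v s2) ->
          (index s1 (ord v) < index s2 (ord v))%N)].

(* zeta_{v,i} (0-based i) *)
Definition omcyc (p : nat) (ord : V -> seq {set V}) (a : V * nat) : {set {set V}} :=
  nth set0 (ess (ord a.1) p) a.2.

(* omega lists Omega (indexed by pairs (v,i)) in the order prec_Omega *)
Definition valid_omega (p : nat) (ord : V -> seq {set V}) (omega : seq (V * nat)) : Prop :=
  [/\ uniq omega,
      (forall a, (a \in omega) = (a.2 < size (ess (ord a.1) p))%N),
      (forall a b, a \in omega -> b \in omega ->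
          rc a.1 (omcyc p ord a) < rc b.1 (omcyc p ord b) ->
          (index a omega < index b omega)%N)
    & (forall v i i', (v, i) \in omega -> (v, i') \in omega -> (i < i')%N ->
          (index (v, i) omega < index (v, i') omega)%N)].
End Geometry.

Definition buildM (K : {set {set V}}) (p : nat) (cycs : seq {set {set V}}) : seq {set {set V}} :=
  foldl (fun M z => if in_span K p z M then M else rcons M z) [::] cycs.

Definition Mcycles (p : nat) (K : {set {set V}}) (ord : V -> seq {set V})
  (omega : seq (V * nat)) : seq {set {set V}} :=
  buildM K p [seq omcyc p ord a | a <- omega].

End Complex.

(* Suppose r_P(zeta_j) > r_P([zeta'_j]) and let k <= j.  The class [zeta'_k] has a
   representative e with r_v(e) <= r_P([zeta'_j]) for some vertex v.  Because the
   reduced columns of D_v are triangular with distinct lowest ones, e is, modulo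
   boundaries, a sum of essential cycles of D_v born no later than the last simplex
   of e; each has radius at most r_v(e) < r_P(zeta_j), so it precedes zeta_j in
   prec_Omega and its class is already spanned by zeta_1, ..., zeta_(j-1).  Thus the
   classes of zeta'_1, ..., zeta'_j, which are independent since the m cycles zeta'
   span H_p(K) of dimension m, would lie in a space of dimension j - 1. *)

From HB Require Import structures.
From mathcomp Require Import all_boot all_order all_algebra.
From mathcomp Require Import reals zify.
Set Implicit Arguments. Unset Strict Implicit. Unset Printing Implicit Defensive.
Import Order.TTheory GRing.Theory Num.Theory.

Section SymmetricDifference.
Variable T : finType.
Implicit Types A B C : {set T}.

Lemma in_symd A B x : (x \in symd A B) = (x \in A) (+) (x \in B).
Proof. by rewrite /symd !inE; case: (x \in A); case: (x \in B). Qed.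

Lemma symdC A B : symd A B = symd B A.
Proof. by apply/setP=> x; rewrite !in_symd addbC. Qed.

Lemma symdA A B C : symd A (symd B C) = symd (symd A B) C.
Proof. by apply/setP=> x; rewrite !in_symd addbA. Qed.

Lemma symd0 A : symd A set0 = A.
Proof. by apply/setP=> x; rewrite in_symd inE addbF. Qed.

Lemma sym0d A : symd set0 A = A.
Proof. by rewrite symdC symd0. Qed.

Lemma symdd A : symd A A = set0.
Proof. by apply/setP=> x; rewrite in_symd inE addbb. Qed.

Lemma symdK A B : symd (symd A B) B = A.
Proof. by rewrite -symdA symdd symd0. Qed.

Lemma odd_card_symd A B : odd #|symd A B| = odd #|A| (+) odd #|B|.
Proof.
have disjD : (A :\: B) :&: (B :\: A) = set0.
  by apply/setP=> x; rewrite !inE; case: (x \in A); case: (x \in B).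
rewrite /symd cardsU disjD cards0 subn0 -(cardsID B A) -(cardsID A B) setIC !oddD.
by case: (odd #|B :&: A|); case: (odd #|A :\: B|); case: (odd #|B :\: A|).
Qed.

End SymmetricDifference.

Section Boundary.
Variable V : finType.
Implicit Types (A B c : {set {set V}}) (K : {set {set V}}).

Lemma bnd_symd A B : bnd (symd A B) = symd (bnd A) (bnd B).
Proof.
apply/setP=> t; rewrite in_symd !inE.
have -> : [set s in symd A B | facet t s] =
          symd [set s in A | facet t s] [set s in B | facet t s].
  by apply/setP=> s; rewrite !(inE, in_symd); case: (facet t s); rewrite ?andbT ?andbF.
by rewrite odd_card_symd; case: (t != set0).
Qed.

Lemma bnd_set0 : bnd (set0 : {set {set V}}) = set0.
Proof.
apply/setP=> t; rewrite !inE.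
suff -> : [set s in (set0 : {set {set V}}) | facet t s] = set0 by rewrite cards0 andbF.
by apply/setP=> s; rewrite !inE.
Qed.

Lemma bnd_set1 (s : {set V}) : bnd [set s] = [set t | (t != set0) && facet t s].
Proof.
apply/setP=> t; rewrite !inE.
case: (boolP (facet t s)) => h.
  have -> : [set x in [set s] | facet t x] = [set s].
    by apply/setP=> x; rewrite !inE; case: eqP => // ->.
  by rewrite cards1 andbT.
have -> : [set x in [set s] | facet t x] = set0.
  by apply/setP=> x; rewrite !inE; case: eqP => // ->; rewrite (negbTE h).
by rewrite cards0 !andbF.
Qed.

(* The facets of [s] containing a codimension-two face [u] are the [x |: u] with
   [x] in [s :\: u]: there are exactly two of them. *)
Lemma facets_through_card (s u : {set V}) :
  u \subset s -> #|s| = #|u|.+2 ->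
  #|[set t in bnd [set s] | facet u t]| = 2.
Proof.
move=> us cs; rewrite bnd_set1.
have -> : [set t in [set t | (t != set0) && facet t s] | facet u t] =
          (fun x => x |: u) @: (s :\: u).
  apply/setP=> t; rewrite !inE; apply/idP/imsetP.
    move=> /andP [/andP [_ /andP [ts /eqP cts]] /andP [ut /eqP cut]].
    have [x hx] : exists x, t :\: u = [set x].
      by apply/cards1P; rewrite cardsD (setIidPr ut) cut subSnn.
    have xt : x \in t :\: u by rewrite hx set11.
    exists x; first by move: xt; rewrite !inE => /andP [-> /(subsetP ts)].
    apply/setP=> y; rewrite !inE; apply/idP/idP.
      move=> yt; case: (boolP (y \in u)) => yu; first by rewrite orbT.
      have : y \in t :\: u by rewrite inE yu.
      by rewrite hx inE => ->.
    by case/orP=> [/eqP -> | /(subsetP ut)]; [move: xt; rewrite inE => /andP [] |].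
  case=> x; rewrite inE => /andP [xu xs] ->.
  have ct : #|x |: u| = #|u|.+1 by rewrite cardsU1 xu.
  rewrite /facet subsetUr ct cs !eqxx !andbT; apply/andP; split.
    by apply/set0Pn; exists x; rewrite !inE eqxx.
  by apply/subsetP=> y; rewrite !inE => /orP [/eqP -> // | /(subsetP us)].
rewrite card_in_imset ?cardsD ?(setIidPr us) ?cs; first by rewrite -addn2 addKn.
move=> x y; rewrite !inE => /andP [xu _] /andP [yu _] e.
have : x \in y |: u by rewrite -e !inE eqxx.
by rewrite !inE (negbTE xu) orbF => /eqP.
Qed.

Lemma bnd_bnd_set1 (s : {set V}) : bnd (bnd [set s]) = set0.
Proof.
apply/setP=> u; rewrite [in LHS]inE [in RHS]inE.
case: (boolP ((u \subset s) && (#|s| == #|u|.+2))) => [/andP [us /eqP cs] | h].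
  by rewrite (facets_through_card us cs) andbF.
rewrite bnd_set1; set F := [set x in _ | _]; suff -> : F = set0 by rewrite cards0 andbF.
apply/setP=> t; rewrite !inE.
apply/negP=> /andP [/andP [_ /andP [ts /eqP cts]] /andP [ut /eqP cut]].
by move/negP: h; apply; rewrite (subset_trans ut ts) cts cut /=.
Qed.

Lemma bnd_bnd A : bnd (bnd A) = set0.
Proof.
elim: {A}_.+1 {-2}A (ltnSn #|A|) => // n IH A.
case: (set_0Vmem A) => [-> _ | [s sA] cA]; first by rewrite !bnd_set0.
have -> : A = symd (A :\ s) [set s].
  apply/setP=> x; rewrite in_symd !inE.
  by case: (x =P s) => [-> | _]; rewrite ?sA ?eqxx ?andbF ?addbF.
rewrite !bnd_symd bnd_bnd_set1 symd0 IH //.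
by move: cA; rewrite (cardsD1 s A) sA.
Qed.

Lemma pchain_symd K q A B : pchain K q A -> pchain K q B -> pchain K q (symd A B).
Proof.
move=> /subsetP hA /subsetP hB; apply/subsetP=> x; rewrite in_symd.
by case hx: (x \in A) => /= h; [exact: hA | exact: hB].
Qed.

Lemma pchain_set0 K q : pchain K q set0.
Proof. exact: sub0set. Qed.

Lemma bnd_pchain K q c : is_complex K -> pchain K q.+1 c -> pchain K q (bnd c).
Proof.
move=> [_ K_face _] /subsetP cK; apply/subsetP=> t.
rewrite [in X in X -> _]inE => /andP [t0 odd_t].
have : [set x in c | facet t x] != set0 by apply: contraTneq odd_t => ->; rewrite cards0.
move=> /set0Pn [x]; rewrite inE => /andP [xc /andP [tx /eqP ctx]].
move: (cK x xc); rewrite inE => /andP [xK /eqP cx].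
by rewrite inE (K_face x t xK tx t0) /=; move: cx; rewrite ctx => [[->]].
Qed.

Lemma pcycle_symd K q A B : pcycle K q A -> pcycle K q B -> pcycle K q (symd A B).
Proof.
by move=> [Aq A_cyc] [Bq B_cyc]; split; rewrite ?pchain_symd // bnd_symd A_cyc B_cyc symd0.
Qed.

Lemma bnd_pcycle K q c : is_complex K -> pchain K q.+1 c -> pcycle K q (bnd c).
Proof. by move=> hK cq; split; [exact: bnd_pchain | exact: bnd_bnd]. Qed.

End Boundary.

Local Open Scope ring_scope.

Lemma F2_addnn (a : 'F_2) : a + a = 0.
Proof. exact: (addrr_pchar2 (pchar_Fp (isT : prime 2))). Qed.

Lemma F2_cases (a : 'F_2) : a = 0 \/ a = 1.
Proof. by case: a => [[|[|k]] Hk]; [left; apply: val_inj | right; apply: val_inj |]. Qed.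

Section ChainVectors.
Variable V : finType.
Local Notation chain := {set {set V}}.
Local Notation row := 'rV['F_2]_#|{set V}|.

Definition chvec (z : chain) : row := \row_i (enum_val i \in z)%:R.

Lemma chvec_symd A B : chvec (symd A B) = chvec A + chvec B.
Proof.
apply/rowP=> i; rewrite !mxE in_symd.
by case: (enum_val i \in A); case: (enum_val i \in B); rewrite ?F2_addnn ?addr0 ?add0r.
Qed.

Lemma chvec_set0 : chvec set0 = 0.
Proof. by apply/rowP=> i; rewrite !mxE inE. Qed.

Lemma chvec_inj : injective chvec.
Proof.
move=> A B eAB; apply/setP=> x.
have := congr1 (fun M : row => M 0 (enum_rank x)) eAB.
rewrite !mxE enum_rankK.
by case: (x \in A); case: (x \in B) => // /(congr1 val).
Qed.

Definition chain_span (L : seq chain) := (\sum_(z <- L) <<chvec z>>)%MS.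

Lemma chain_span_nil : chain_span [::] = 0.
Proof. exact: big_nil. Qed.

Lemma chain_span_cons z L : chain_span (z :: L) = (<<chvec z>> + chain_span L)%MS.
Proof. exact: big_cons. Qed.

Lemma chain_span_rcons L z : chain_span (rcons L z) = (chain_span L + <<chvec z>>)%MS.
Proof. exact: big_rcons. Qed.

Lemma chain_span_cat L1 L2 : chain_span (L1 ++ L2) = (chain_span L1 + chain_span L2)%MS.
Proof. exact: big_cat. Qed.

Lemma chain_span_sub L m (C : 'M['F_2]_(m, #|{set V}|)) :
  (forall z, z \in L -> (chvec z <= C)%MS) -> (chain_span L <= C)%MS.
Proof.
elim: L => [|z L IH] LC; first by rewrite chain_span_nil sub0mx.
rewrite chain_span_cons addsmx_sub genmxE LC ?mem_head // IH // => y yL.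
by rewrite LC // inE yL orbT.
Qed.

Lemma chvec_sumch_mask (b : seq bool) L : (chvec (sumch (mask b L)) <= chain_span L)%MS.
Proof.
elim: L b => [|z L IH] [|[] b] /=; rewrite ?chvec_set0 ?sub0mx //.
  by rewrite chain_span_cons chvec_symd addmx_sub_adds // genmxE.
by rewrite chain_span_cons (submx_trans (IH b)) // addsmxSr.
Qed.

Variable K : {set {set V}}.
Variable p : nat.

Definition is_bnd_vec (u : row) : bool :=
  [exists c : chain, pchain K p.+1 c && (u == chvec (bnd c))].

Definition bnd_space := (\sum_(u | is_bnd_vec u) <<u>>)%MS.

Lemma is_bnd_vec0 : is_bnd_vec 0.
Proof. by apply/existsP; exists set0; rewrite pchain_set0 bnd_set0 chvec_set0 eqxx. Qed.

Lemma is_bnd_vecD u w : is_bnd_vec u -> is_bnd_vec w -> is_bnd_vec (u + w).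
Proof.
move=> /existsP [c /andP [cp /eqP ->]] /existsP [c' /andP [c'p /eqP ->]].
apply/existsP; exists (symd c c'); rewrite pchain_symd //=.
by rewrite bnd_symd chvec_symd.
Qed.

Lemma sub_bnd_spaceE u : (u <= bnd_space)%MS = is_bnd_vec u.
Proof.
apply/idP/idP=> [/sub_sumsmxP [u_ ->] | bu]; last by apply: (sumsmx_sup u) => //; rewrite genmxE.
apply: (big_ind is_bnd_vec); [exact: is_bnd_vec0 | exact: is_bnd_vecD |] => w bw.
have /sub_rVP [a ->] : (u_ w *m <<w>> <= w)%MS by rewrite -(genmxE w) submxMl.
by case: (F2_cases a) => ->; rewrite ?scale0r ?scale1r ?is_bnd_vec0.
Qed.

Lemma bnd_sub_bnd_space c : pchain K p.+1 c -> (chvec (bnd c) <= bnd_space)%MS.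
Proof. by move=> cp; rewrite sub_bnd_spaceE; apply/existsP; exists c; rewrite cp eqxx. Qed.

Lemma in_spanE z L : in_span K p z L = (chvec z <= bnd_space + chain_span L)%MS.
Proof.
apply/idP/idP.
  move=> /existsP [b /existsP [c /andP [cp /eqP ec]]].
  rewrite -(symdK z (sumch (mask b L))) -ec chvec_symd.
  by rewrite addmx_sub_adds ?bnd_sub_bnd_space ?chvec_sumch_mask.
elim: L z => [|x L IH] z.
  rewrite chain_span_nil addsmx0 sub_bnd_spaceE => /existsP [c /andP [cp /eqP ec]].
  apply/existsP; exists [tuple]; apply/existsP; exists c.
  by rewrite cp /= symd0 (chvec_inj ec).
rewrite chain_span_cons addsmxA (addsmxC bnd_space) -addsmxA.
move=> /sub_addsmxP [[u0 w0] /= ez].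
set u := u0 *m _ in ez; set w := w0 *m _ in ez.
have wL : (w <= bnd_space + chain_span L)%MS by rewrite submxMl.
have /sub_rVP [a ua] : (u <= chvec x)%MS by rewrite -(genmxE (chvec x)) submxMl.
case: (F2_cases a) => a01; rewrite {}a01 ?scale0r ?scale1r in ua.
  have /existsP [b zb] : in_span K p z L by apply: IH; rewrite ez ua add0r.
  by apply/existsP; exists [tuple of false :: b].
have /existsP [b /existsP [c /andP [cp /eqP ec]]] : in_span K p (symd z x) L.
  by apply: IH; rewrite chvec_symd ez ua addrAC -chvec_symd symdd chvec_set0 add0r.
apply/existsP; exists [tuple of true :: b]; apply/existsP; exists c.
by rewrite cp ec /sumch /= -symdA.
Qed.

Lemma homologous_sub z e m (T : 'M['F_2]_(m, #|{set V}|)) :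
  homologous K p z e -> (bnd_space <= T)%MS -> (chvec e <= T)%MS -> (chvec z <= T)%MS.
Proof.
move=> /existsP [c /andP [cp /eqP ec]] BT eT.
rewrite -(symdK z e) -ec chvec_symd addmx_sub //.
exact: submx_trans (bnd_sub_bnd_space cp) BT.
Qed.

End ChainVectors.

Section Greedy.
Variable V : finType.
Local Notation chain := {set {set V}}.
Implicit Types (L cs : seq chain).

Lemma rank_adds_span_le m (A : 'M['F_2]_(m, #|{set V}|)) L :
  (\rank (A + chain_span L) <= \rank A + size L)%N.
Proof.
elim/last_ind: L => [|L x IH]; first by rewrite chain_span_nil addsmx0 addn0.
rewrite chain_span_rcons addsmxA size_rcons addnS.
apply: leq_trans (mxrank_adds_leqif _ _).1 _.
by rewrite mxrank_gen -[X in (_ <= X)%N]addn1 leq_add // rank_leq_row.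
Qed.

Lemma rank_adds_span_independent m (A : 'M['F_2]_(m, #|{set V}|)) L :
  (forall k, (k < size L)%N -> ~~ (chvec (nth set0 L k) <= A + chain_span (take k L))%MS) ->
  \rank (A + chain_span L) = (\rank A + size L)%N.
Proof.
move=> indep; apply/eqP; rewrite eqn_leq rank_adds_span_le /=.
elim/last_ind: L indep => [|L x IH] indep; first by rewrite chain_span_nil addsmx0 addn0.
rewrite chain_span_rcons addsmxA size_rcons addnS.
have x_new : ~~ (chvec x <= A + chain_span L)%MS.
  by have := indep (size L); rewrite size_rcons nth_rcons ltnn eqxx -cats1 take_size_cat //; apply.
apply: leq_ltn_trans (IH _) _.
  move=> k kL; have := indep k; rewrite size_rcons ltnS (ltnW kL) nth_rcons kL.
  by rewrite -cats1 takel_cat ?(ltnW kL) //; apply.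
rewrite rank_ltmx // ltmxE addsmxSl /=.
by apply: contra x_new => /(submx_trans _); apply; rewrite -(genmxE (chvec x)) addsmxSr.
Qed.

(* Dimension count: [rank A + size L <= rank (A + span L')], while the hypothesis
   to refute bounds the latter by [rank A + j + (size L - j.+1)]. *)
Lemma take_span_not_sub m (A : 'M['F_2]_(m, #|{set V}|)) L L' j :
  (forall k, (k < size L)%N -> ~~ (chvec (nth set0 L k) <= A + chain_span (take k L))%MS) ->
  size L' = size L -> (chain_span L <= A + chain_span L')%MS -> (j < size L)%N ->
  ~~ (A + chain_span (take j.+1 L') <= A + chain_span (take j L))%MS.
Proof.
move=> indep sizeL' LL' jL; apply/negP=> sub_take.
have rL := rank_adds_span_independent indep.
have rLL' : (\rank (A + chain_span L) <= \rank (A + chain_span L'))%N.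
  by apply: mxrankS; rewrite addsmx_sub addsmxSl.
have rL' : (\rank (A + chain_span L') <=
            \rank (A + chain_span (take j.+1 L')) + (size L' - j.+1))%N.
  rewrite -{1}(cat_take_drop j.+1 L') chain_span_cat addsmxA.
  by apply: leq_trans (rank_adds_span_le _ _) _; rewrite size_drop.
have rtake := mxrankS sub_take.
have rj : (\rank (A + chain_span (take j L)) <= \rank A + j)%N.
  by rewrite -{2}(size_takel (ltnW jL)) rank_adds_span_le.
lia.
Qed.

Variable K : {set {set V}}.
Variable p : nat.
Local Notation B := (bnd_space K p).
Local Notation M cs := (buildM K p cs).

Lemma buildM_rcons cs x :
  M (rcons cs x) = if in_span K p x (M cs) then M cs else rcons (M cs) x.
Proof. exact: foldl_rcons. Qed.

Lemma mem_buildM cs z : z \in M cs -> z \in cs.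
Proof.
elim/last_ind: cs => [//|cs x IH]; rewrite buildM_rcons.
case: ifP => _; rewrite -!cats1 !mem_cat; first by move/IH ->.
by case/orP=> [/IH -> // | ->]; rewrite orbT.
Qed.

Lemma buildM_spans cs z : z \in cs -> (chvec z <= B + chain_span (M cs))%MS.
Proof.
elim/last_ind: cs => [//|cs x IH]; rewrite -cats1 mem_cat inE cats1 buildM_rcons in_spanE.
case: ifP => x_span /orP [/IH | /eqP ->] //.
  by move/submx_trans; apply; rewrite chain_span_rcons addsmxA addsmxSl.
by rewrite chain_span_rcons addsmxA (submx_trans _ (addsmxSr _ _)) // genmxE.
Qed.

Lemma buildM_independent cs k : (k < size (M cs))%N ->
  ~~ (chvec (nth set0 (M cs) k) <= B + chain_span (take k (M cs)))%MS.
Proof.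
elim/last_ind: cs k => [//|cs x IH] k; rewrite buildM_rcons in_spanE.
case: ifP => [_ | x_new]; first exact: IH.
rewrite size_rcons ltnS leq_eqVlt => /orP [/eqP -> | kM].
  by rewrite nth_rcons ltnn eqxx -cats1 take_size_cat // x_new.
by rewrite nth_rcons kM -cats1 takel_cat ?(ltnW kM) //; apply: IH.
Qed.

Lemma buildM_prefix cs j : (j < size (M cs))%N ->
  exists2 q, (q < size cs)%N & nth set0 cs q = nth set0 (M cs) j /\
    forall q', (q' < q)%N -> (chvec (nth set0 cs q') <= B + chain_span (take j (M cs)))%MS.
Proof.
elim/last_ind: cs j => [//|cs x IH] j; rewrite buildM_rcons in_spanE.
case: ifP => [_ /IH [q qcs [Mj before]] | x_new].
  exists q; first by rewrite size_rcons ltnS ltnW.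
  rewrite nth_rcons qcs; split=> // q' q'q.
  by rewrite nth_rcons (ltn_trans q'q qcs); apply: before.
rewrite size_rcons ltnS leq_eqVlt => /orP [/eqP -> | jM].
  exists (size cs); first by rewrite size_rcons.
  rewrite !nth_rcons !ltnn !eqxx; split=> // q' q'cs.
  by rewrite nth_rcons q'cs -cats1 take_size_cat // buildM_spans ?mem_nth.
have [q qcs [Mj before]] := IH j jM.
exists q; first by rewrite size_rcons ltnS ltnW.
rewrite !nth_rcons qcs jM; split=> // q' q'q.
by rewrite nth_rcons (ltn_trans q'q qcs) -cats1 takel_cat ?(ltnW jM) //; apply: before.
Qed.

End Greedy.

Section Reduction.
Variable V : finType.
Variable K : {set {set V}}.
Variable s : seq {set V}.
Hypothesis hK : is_complex K.
Hypothesis s_uniq : uniq s.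
Hypothesis s_K : forall x, (x \in s) = (x \in K).
Local Notation N := (size s).
Local Notation col := {set 'I_N}.
Local Notation sn i := (nth set0 s (i : nat)).
Local Notation red := (reduction s).

Definition chain_of (X : col) : {set {set V}} := [set sn i | i : 'I_N in X].

Lemma sn_inj : injective (fun i : 'I_N => sn i).
Proof.
by move=> i j eij; apply/val_inj/eqP; rewrite -(nth_uniq set0 (ltn_ord i) (ltn_ord j) s_uniq) eij.
Qed.

Lemma index_sn (i : 'I_N) : index (sn i) s = i.
Proof. exact: index_uniq. Qed.

Lemma mem_chain_of (i : 'I_N) X : (sn i \in chain_of X) = (i \in X).
Proof. exact: (mem_imset _ _ sn_inj). Qed.

Lemma sn_K (i : 'I_N) : sn i \in K.
Proof. by rewrite -s_K mem_nth. Qed.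

Lemma K_sn t : t \in K -> exists i : 'I_N, t = sn i.
Proof.
rewrite -s_K => ts; have ti : (index t s < N)%N by rewrite index_mem.
by exists (Ordinal ti); rewrite nth_index.
Qed.

Lemma chain_of_K X t : t \in chain_of X -> t \in K.
Proof. by move=> /imsetP [i _ ->]; exact: sn_K. Qed.

Lemma chain_of_symd X Y : chain_of (symd X Y) = symd (chain_of X) (chain_of Y).
Proof.
apply/setP=> t; rewrite in_symd.
case: (boolP (t \in K)) => [/K_sn [i ->] | tK]; first by rewrite !mem_chain_of in_symd.
by rewrite !(contraNF (@chain_of_K _ t)).
Qed.

Lemma chain_of_set0 : chain_of set0 = set0.
Proof. exact: imset0. Qed.

Lemma chain_of_eq0 X : chain_of X = set0 -> X = set0.
Proof. by move=> eX; apply/setP=> i; rewrite -mem_chain_of eX !inE. Qed.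

Lemma chain_of_set1 (j : 'I_N) : chain_of [set j] = [set sn j].
Proof. exact: imset_set1. Qed.

Lemma chain_of_bdcol (j : 'I_N) : chain_of (bdcol j) = bnd [set sn j].
Proof.
case: hK => K0 K_face _; rewrite bnd_set1; apply/setP=> t; rewrite inE.
apply/imsetP/andP => [[i ij ->] | [t0 tj]].
  rewrite inE in ij; split=> //.
  by apply: contraNneq K0 => <-; exact: sn_K.
have [i ti] := K_sn (K_face _ _ (sn_K j) (proj1 (andP tj)) t0).
by exists i; rewrite // inE -ti.
Qed.

Lemma ltn_low (c : col) (i : 'I_N) : i \in c -> (i < low c)%N.
Proof. exact: (@leq_bigmax_cond _ (fun i => i \in c) (fun i : 'I_N => (i : nat).+1)). Qed.

Lemma low_leP (c : col) m : reflect (forall i : 'I_N, i \in c -> (i < m)%N) (low c <= m)%N.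
Proof. exact: (bigmax_leqP (fun i => i \in c) m (fun i : 'I_N => (i : nat).+1)). Qed.

Lemma lowP (c : col) : c != set0 -> exists2 i : 'I_N, i \in c & low c = (i : nat).+1.
Proof. by rewrite -card_gt0 => /(eq_bigmax_cond (fun i : 'I_N => (i : nat).+1)) [i]; exists i. Qed.

Lemma low_eq0 (c : col) : (low c == 0%N) = (c == set0).
Proof.
apply/idP/eqP=> [lc0 | ->]; last by rewrite /low big_pred0 // => i; rewrite inE.
by apply/eqP; apply: contraTT lc0 => /lowP [i _ ->].
Qed.

Lemma mem_low (c : col) (i : 'I_N) : low c = (i : nat).+1 -> i \in c.
Proof.
move=> lci; have [|i' i'c li'] := @lowP c; first by rewrite -low_eq0 lci.
by have -> : i = i' by apply/val_inj/succn_inj; rewrite -lci li'.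
Qed.

Lemma low_symd (A B : col) : low A != 0%N -> low A = low B -> (low (symd A B) < low A)%N.
Proof.
rewrite low_eq0 => /lowP [i iA lAi] lAB.
have iB : i \in B by apply: mem_low; rewrite -lAB.
rewrite lAi ltnS; apply/low_leP=> k; rewrite in_symd.
have [-> | nki] := eqVneq k i; first by rewrite iA iB.
have nki' : (k : nat) != i by apply: contra nki => /eqP/val_inj ->.
case kA: (k \in A) => /= kc; rewrite ltn_neqAle nki' -ltnS -lAi /=.
  exact: ltn_low.
by rewrite lAB ltn_low.
Qed.


Definition reduced_col (k : nat) (RW : col * col) :=
  [/\ chain_of RW.1 = bnd (chain_of RW.2),
      (forall i : 'I_N, i \in RW.2 -> (i <= k)%N),
      (forall i : 'I_N, (i : nat) = k -> i \in RW.2)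
    & (forall i : 'I_N, i \in RW.2 -> #|sn i| = #|sn k|)].

Definition reduction_inv (l : seq (col * col)) :=
  (forall k, (k < size l)%N -> reduced_col k (nth (set0, set0) l k)) /\
  (forall k1 k2, (k1 < size l)%N -> (k2 < size l)%N -> k1 != k2 ->
     low (nth (set0, set0) l k1).1 != 0%N ->
     low (nth (set0, set0) l k1).1 != low (nth (set0, set0) l k2).1).

Lemma reduced_col_facet k RW (i : 'I_N) : reduced_col k RW -> i \in RW.1 ->
  (#|sn i|).+1 = #|sn k|.
Proof.
case=> RW_bnd _ _ W_dim iR.
have : sn i \in bnd (chain_of RW.2) by rewrite -RW_bnd mem_chain_of.
rewrite inE => /andP [_ odd_cofaces].
have : [set x in chain_of RW.2 | facet (sn i) x] != set0.
  by apply: contraTneq odd_cofaces => ->; rewrite cards0.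
move=> /set0Pn [x]; rewrite inE => /andP [/imsetP [i' i'W ->] /andP [_ /eqP ci']].
by rewrite -ci' W_dim.
Qed.

Lemma reduced_col_symd j k RW RW' : (k < j)%N -> low RW.1 != 0%N -> low RW.1 = low RW'.1 ->
  reduced_col j RW -> reduced_col k RW' -> reduced_col j (symd RW.1 RW'.1, symd RW.2 RW'.2).
Proof.
move=> kj lR0 lRR' colj colk; case: (colj) => R_bnd W_le W_top W_dim.
case: (colk) => R'_bnd W'_le _ W'_dim; split=> /=.
- by rewrite !chain_of_symd R_bnd R'_bnd bnd_symd.
- move=> i; rewrite in_symd; case iW: (i \in RW.2) => /= iW'; first exact: W_le.
  exact: ltnW (leq_ltn_trans (W'_le _ iW') kj).
- move=> i ij; rewrite in_symd W_top //.
  by apply/negP=> /W'_le; rewrite ij leqNgt kj.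
have [i iR lRi] : exists2 i : 'I_N, i \in RW.1 & low RW.1 = (i : nat).+1.
  by apply: lowP; rewrite -low_eq0.
have iR' : i \in RW'.1 by apply: mem_low; rewrite -lRR'.
have dim_kj : #|sn k| = #|sn j|.
  by rewrite -(reduced_col_facet colj iR) (reduced_col_facet colk iR').
move=> i'; rewrite in_symd; case iW: (i' \in RW.2) => /= iW'; first exact: W_dim.
by rewrite W'_dim.
Qed.


Lemma red_col_spec f prev (j : 'I_N) RW :
  reduction_inv prev -> size prev = j -> reduced_col j RW ->
  reduced_col j (red_col f prev RW) /\
  ((low RW.1 < f)%N -> low (red_col f prev RW).1 = 0%N \/
      ~~ has (fun q : col * col => low q.1 == low (red_col f prev RW).1) prev).
Proof.
move=> [prev_col _] sp.
elim: f RW => [|f IH] [R W] colRW /=; first by split.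
set k := find _ prev.
case: ifP => [/andP [lR0 kprev] | stop]; last first.
  split=> // _; case: (boolP (low R == 0%N)) => [/eqP -> | lR0]; first by left.
  by right; rewrite /= has_find; move: stop; rewrite lR0 /= => ->.
set q := nth (set0, set0) prev k.
have lq : low q.1 = low R.
  by apply/eqP; apply: (nth_find _ (a := fun q : col * col => low q.1 == low R)); rewrite has_find.
have kj : (k < j)%N by rewrite -sp.
have [colRW' IH'] :=
  IH _ (@reduced_col_symd j k (R, W) q kj lR0 (esym lq) colRW (prev_col _ kprev)).
split=> // lRf; apply: IH' => /=.
by apply: leq_trans (@low_symd R q.1 lR0 (esym lq)) _; rewrite -ltnS.
Qed.

Lemma reduction_inv_rcons prev (j : 'I_N) : reduction_inv prev -> size prev = j ->
  reduction_inv (rcons prev (red_col N.+1 prev (bdcol j, [set j]))).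
Proof.
move=> inv sp; have [prev_col prev_low] := inv.
have col0 : reduced_col j (bdcol j, [set j]).
  split=> /=; first by rewrite chain_of_bdcol chain_of_set1.
  - by move=> i; rewrite inE => /eqP ->.
  - by move=> i ij; rewrite inE; apply/eqP/val_inj.
  - by move=> i; rewrite inE => /eqP ->.
have [colx lowx] := red_col_spec N.+1 inv sp col0.
move: (red_col N.+1 prev _) colx lowx => x colx lowx.
have {}lowx : low x.1 = 0%N \/ ~~ has (fun q : col * col => low q.1 == low x.1) prev.
  by apply: lowx; rewrite ltnS; apply/low_leP=> i _; exact: ltn_ord.
have {}lowx : forall k, (k < size prev)%N ->
    low x.1 = 0%N \/ low x.1 != low (nth (set0, set0) prev k).1.
  move=> k kp; case: lowx => [x0 | x_new]; [by left | right].
  apply: contra x_new => /eqP lxk; apply/hasP.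
  by exists (nth (set0, set0) prev k); rewrite ?mem_nth // lxk.
split=> [k | k1 k2]; rewrite !size_rcons !ltnS.
  rewrite leq_eqVlt => /orP [/eqP -> | kp]; first by rewrite nth_rcons ltnn eqxx sp.
  by rewrite nth_rcons kp; apply: prev_col.
rewrite (leq_eqVlt k1) (leq_eqVlt k2) => /orP [/eqP -> | k1p] /orP [/eqP -> | k2p];
  rewrite ?eqxx // !nth_rcons ?ltnn ?eqxx ?k1p ?k2p => k12 lk1.
- by case: (lowx _ k2p) => [x0 | //]; rewrite x0 eqxx in lk1.
- by case: (lowx _ k1p) => [-> // | ]; rewrite eq_sym.
- exact: prev_low.
Qed.

Definition reduction_step (prev : seq (col * col)) (j : 'I_N) :=
  rcons prev (red_col N.+1 prev (bdcol j, [set j])).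

Lemma reduction_inv_foldl (js : seq 'I_N) : map val js = iota 0 (size js) ->
  reduction_inv (foldl reduction_step [::] js) /\ size (foldl reduction_step [::] js) = size js.
Proof.
elim/last_ind: js => [|js j IH]; first by split=> //; split=> k; rewrite ltn0.
rewrite map_rcons size_rcons -addn1 iotaD add0n -cats1 => /eqP.
rewrite eqseq_cat ?size_map ?size_iota // => /andP [/eqP /IH [inv sz] /eqP [ej]].
rewrite foldl_rcons size_rcons sz addn1; split=> //.
by apply: reduction_inv_rcons; rewrite // sz ej.
Qed.

Lemma reduction_invariant : reduction_inv red /\ size red = N.
Proof. by have := @reduction_inv_foldl (enum 'I_N); rewrite val_enum_ord size_enum_ord; apply. Qed.

Definition Rk (k : 'I_N) : col := (nth (set0, set0) red k).1.
Definition Vk (k : 'I_N) : col := (nth (set0, set0) red k).2.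

Lemma size_reduction : size red = N.
Proof. by case: reduction_invariant. Qed.

Lemma reduced_col_red (k : 'I_N) : reduced_col k (Rk k, Vk k).
Proof.
case: reduction_invariant => [[red_col _] sz].
by move: (red_col k); rewrite sz /Rk /Vk; case: (nth _ _ _) => R W; apply.
Qed.

Lemma low_Rk_inj (k1 k2 : 'I_N) : k1 != k2 -> low (Rk k1) != 0%N -> low (Rk k1) != low (Rk k2).
Proof. by case: reduction_invariant => [[_ red_low] sz] k12; apply: red_low; rewrite ?sz. Qed.

Definition Vsum (js : seq 'I_N) : col := foldr (fun j acc => symd (Vk j) acc) set0 js.
Definition Rsum (js : seq 'I_N) : col := foldr (fun j acc => symd (Rk j) acc) set0 js.

Lemma bnd_Vsum js : bnd (chain_of (Vsum js)) = chain_of (Rsum js).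
Proof.
elim: js => [|j js IH] /=; first by rewrite chain_of_set0 bnd_set0.
by case: (reduced_col_red j) => Rk_bnd _ _ _; rewrite !chain_of_symd bnd_symd IH Rk_bnd.
Qed.

Lemma mem_Rsum js (x : 'I_N) : (x \in Rsum js) = odd (count (fun j => x \in Rk j) js).
Proof.
elim: js => [|j js IH] /=; first by rewrite inE.
by rewrite in_symd IH oddD; case: (x \in Rk j).
Qed.

(* Triangularity of [V]: peel off the [V]-column indexed by the largest element. *)
Lemma Vsum_decomp n (X : col) : (forall i : 'I_N, i \in X -> (i < n)%N) ->
  exists js : seq 'I_N, [/\ uniq js, (forall j, j \in js -> (j < n)%N), X = Vsum js
     & forall m : 'I_N, m \in X -> (forall i : 'I_N, i \in X -> (i <= m)%N) -> m \in js].
Proof.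
elim: n X => [|n IH] X X_lt.
  exists [::]; split=> // [|m /X_lt //].
  by apply/setP=> i; rewrite inE; apply/negP=> /X_lt.
have [nN | Nn] := ltnP n N; last first.
  have [js [js_uniq js_lt eX js_top]] := IH X (fun i _ => leq_trans (ltn_ord i) Nn).
  by exists js; split=> // j /js_lt /ltnW.
set o := Ordinal nN.
have X_lt' : forall i : 'I_N, i \in X -> i != o -> (i < n)%N.
  move=> i /X_lt; rewrite ltnS leq_eqVlt => /orP [/eqP ein | //] /eqP [].
  exact: val_inj.
case: (boolP (o \in X)) => oX; last first.
  have [js [js_uniq js_lt eX js_top]] := IH X (fun i iX => X_lt' i iX (memPn oX i iX)).
  by exists js; split=> // j /js_lt /ltnW.
case: (reduced_col_red o) => _ V_le V_top _; have oV : o \in Vk o by apply: V_top.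
have [|js [js_uniq js_lt eX js_top]] := IH (symd X (Vk o)).
  move=> i; rewrite in_symd; have [-> | nio] := eqVneq i o; first by rewrite oX oV.
  case iX: (i \in X) => /= iV; first exact: X_lt'.
  by move: (V_le i iV); rewrite leq_eqVlt => /orP [/eqP/val_inj/eqP | //]; rewrite (negbTE nio).
exists (o :: js); split.
- by rewrite /= js_uniq andbT; apply/negP=> /js_lt; rewrite ltnn.
- by move=> j; rewrite inE => /orP [/eqP -> // | /js_lt /ltnW].
- by rewrite /= -eX symdC symdK.
- move=> m mX m_top; rewrite inE; apply/orP; left; apply/eqP/val_inj/eqP.
  by rewrite eqn_leq -ltnS X_lt // m_top.
Qed.

(* Nonzero reduced columns have distinct lowest ones, so no sum of them cancels. *)
Lemma Rsum_eq0 js : uniq js -> Rsum js = set0 -> forall j, j \in js -> Rk j = set0.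
Proof.
move=> js_uniq Rjs0 j1 j1js; apply/eqP; apply/negPn/negP => R1.
have hP : (j1 \in js) && (Rk j1 != set0) by rewrite j1js R1.
case: (@arg_maxnP _ j1 (fun j => (j \in js) && (Rk j != set0)) (fun j => low (Rk j)) hP).
move=> j0 /andP [j0js R0] j0_max; have [i0 i0R li0] := lowP R0.
suff : i0 \in Rsum js by rewrite Rjs0 inE.
rewrite mem_Rsum (@eq_in_count _ _ (pred1 j0)) ?count_uniq_mem ?j0js // => j jjs /=.
apply/idP/eqP => [i0j | ->] //; apply/eqP; apply: contraT => jj0.
have Rj : Rk j != set0 by apply/set0Pn; exists i0.
have lj1 : (low (Rk j) <= low (Rk j0))%N by apply: j0_max; rewrite jjs Rj.
have lj : low (Rk j) = low (Rk j0) by apply/eqP; rewrite eqn_leq lj1 li0 ltn_low.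
by move: (low_Rk_inj jj0); rewrite lj eqxx low_eq0 R0 => /(_ isT).
Qed.

Lemma pchain_of q (X : col) : (forall i : 'I_N, i \in X -> #|sn i| = q.+1) ->
  pchain K q (chain_of X).
Proof. by move=> X_dim; apply/subsetP=> x /imsetP [i iX ->]; rewrite inE sn_K X_dim ?eqxx. Qed.

Lemma pchain_sub_K q e : pchain K q e -> e \subset K.
Proof. by move=> /subset_trans; apply; apply/subsetP=> x; rewrite inE => /andP []. Qed.

Lemma top_cycle_Rk_eq0 q e (o : 'I_N) : pcycle K q e -> sn o \in e ->
  (forall x, x \in e -> (index x s <= o)%N) -> Rk o = set0.
Proof.
move=> [/pchain_sub_K eK e_cyc] oe o_top.
have eX : e = chain_of [set i : 'I_N | sn i \in e].
  apply/setP=> x; apply/idP/imsetP => [xe | [i + ->]]; last by rewrite inE.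
  by have [i exi] := K_sn (subsetP eK x xe); exists i; rewrite // inE -exi.
have [js [js_uniq _ eV js_top]] :=
  @Vsum_decomp N [set i : 'I_N | sn i \in e] (fun i _ => ltn_ord i).
apply: (Rsum_eq0 js_uniq).
  by apply: chain_of_eq0; rewrite -bnd_Vsum -eV -eX.
by apply: js_top => [|i]; rewrite ?inE // => /o_top; rewrite index_sn.
Qed.

Lemma ess_pcycle q (j : 'I_N) : j \in ess_idx s q -> pcycle K q (chain_of (Vk j)).
Proof.
rewrite mem_filter => /andP [/and3P [/eqP j_dim /eqP Rj0 _] _].
case: (reduced_col_red j) => Rk_bnd _ _ V_dim; split; first by apply: pchain_of => i /V_dim ->.
by rewrite -Rk_bnd /Rk Rj0 chain_of_set0.
Qed.

Lemma essE q : ess s q = [seq chain_of (Vk j) | j <- ess_idx s q].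
Proof. by []. Qed.

Lemma nth_ess q i : (i < size (ess s q))%N ->
  exists2 j : 'I_N, j \in ess_idx s q & nth set0 (ess s q) i = chain_of (Vk j).
Proof.
rewrite essE size_map; case E: (ess_idx s q) => [//|j0 l] i_lt.
exists (nth j0 (j0 :: l) i); first by rewrite -E mem_nth // E.
by rewrite (nth_map j0).
Qed.

Lemma top_symd_lt (e : {set {set V}}) (Y : col) (o : 'I_N) : e \subset K ->
  (forall x, x \in e -> (index x s <= o)%N) -> sn o \in e ->
  (forall i : 'I_N, i \in Y -> (i <= o)%N) -> o \in Y ->
  forall x, x \in symd e (chain_of Y) -> (index x s < o)%N.
Proof.
move=> eK e_le oe Y_le oY x xeY.
have xK : x \in K.
  move: xeY; rewrite in_symd; case xe: (x \in e) => /= xY; first exact: (subsetP eK).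
  exact: chain_of_K xY.
move: xeY; have [i ->] := K_sn xK; rewrite index_sn in_symd mem_chain_of.
have [-> | nio] := eqVneq i o; first by rewrite oe oY.
rewrite ltn_neqAle (_ : (i : nat) != o) /=; last by apply: contra nio => /eqP/val_inj ->.
by case ie: (sn i \in e) => /= iY; [rewrite -(index_sn i) e_le | exact: Y_le].
Qed.

Lemma pivot_col (o k : 'I_N) q : #|sn o| = q.+1 -> low (Rk k) = (o : nat).+1 ->
  [/\ o \in Rk k, forall i : 'I_N, i \in Rk k -> (i <= o)%N
    & chain_of (Rk k) = bnd (chain_of (Vk k)) /\ pchain K q.+1 (chain_of (Vk k))].
Proof.
move=> o_dim lk; have oR : o \in Rk k := mem_low lk.
have colk := reduced_col_red k; case: (colk) => Rk_bnd _ _ V_dim.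
split=> // [i /ltn_low | ]; first by rewrite lk ltnS.
split=> //; apply: pchain_of => i /V_dim ->.
by rewrite -(reduced_col_facet colk oR) o_dim.
Qed.

Lemma sublevel_cycle_sub q m (T : 'M['F_2]_(m, #|{set V}|)) t :
  (bnd_space K q <= T)%MS ->
  (forall j : 'I_N, j \in ess_idx s q -> (j <= t)%N -> (chvec (chain_of (Vk j)) <= T)%MS) ->
  forall e, pcycle K q e -> (forall x, x \in e -> (index x s <= t)%N) -> (chvec e <= T)%MS.
Proof.
move=> BT essT.
suff sub_lt : forall n, (n <= t.+1)%N -> forall e, pcycle K q e ->
    (forall x, x \in e -> (index x s < n)%N) -> (chvec e <= T)%MS.
  by move=> e ec e_le; apply: (sub_lt t.+1) => // x /e_le.
elim=> [|n IH] nt e ec e_lt.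
  suff -> : e = set0 by rewrite chvec_set0 sub0mx.
  by apply/setP=> x; rewrite inE; apply/negP=> /e_lt.
have eK := pchain_sub_K ec.1.
case: (boolP [exists x in e, index x s == n]) => [/exists_inP [x xe /eqP xn] | no_n]; last first.
  apply: (IH (ltnW nt)) ec _ => x xe; rewrite ltn_neqAle -ltnS e_lt // andbT.
  by apply: contraNneq no_n => <-; apply/exists_inP; exists x.
have nN : (n < N)%N by rewrite -xn index_mem s_K (subsetP eK).
set o := Ordinal nN.
have oe : sn o \in e by rewrite /= -xn nth_index // s_K (subsetP eK).
have o_top : forall x, x \in e -> (index x s <= o)%N by move=> y /e_lt.
have o_dim : #|sn o| = q.+1 by move: (subsetP ec.1 _ oe); rewrite inE => /andP [_ /eqP].
(* Cancel the top simplex [sn o] of [e] against a column with lowest element [o]: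
   a boundary [R_k] if [o] is a pivot, the essential cycle [V_o] otherwise. *)
suff [Y [Yc oY Y_le YT]] : exists Y : col, [/\ pcycle K q (chain_of Y), o \in Y,
    forall i : 'I_N, i \in Y -> (i <= o)%N & (chvec (chain_of Y) <= T)%MS].
  rewrite -(symdK e (chain_of Y)) chvec_symd addmx_sub //.
  by apply: (IH (ltnW nt)); [exact: pcycle_symd | exact: (@top_symd_lt e Y o)].
case: (boolP (has (fun RW : col * col => low RW.1 == n.+1) red)) => [pivot | unpaired].
  have kN : (find (fun RW : col * col => low RW.1 == n.+1) red < N)%N.
    by move: pivot; rewrite has_find size_reduction.
  have [oR R_le [Rk_bnd Vk_chain]] := @pivot_col o (Ordinal kN) q o_dim (eqP (nth_find _ pivot)).
  exists (Rk (Ordinal kN)); split=> //; rewrite Rk_bnd; first exact: bnd_pcycle.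
  exact: submx_trans (bnd_sub_bnd_space Vk_chain) BT.
have oess : o \in ess_idx s q.
  by rewrite mem_filter mem_enum andbT o_dim eqxx -/(Rk o) (top_cycle_Rk_eq0 ec oe o_top) eqxx.
case: (reduced_col_red o) => _ V_le V_top _.
by exists (Vk o); split; [exact: ess_pcycle | exact: V_top | exact: V_le | exact: essT].
Qed.

End Reduction.

Section Radii.
Variable R : realType.
Variable d : nat.
Variable V : finType.
Variable pt : V -> 'rV[R]_d.
Implicit Types (c : {set {set V}}) (sg : {set V}).

Lemma minseq_le (l : seq R) x : x \in l -> minseq l <= x.
Proof.
case: l => [//|y l] /=; elim: l y x => [|z l IH] y x; first by rewrite inE => /eqP ->.
rewrite /= !inE ge_min => /or3P [/eqP -> | /eqP -> | xl]; first by rewrite IH ?mem_head ?orbT.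
  by rewrite lexx.
by rewrite IH ?orbT // inE xl orbT.
Qed.

Lemma minseq_mem (l : seq R) : l != [::] -> minseq l \in l.
Proof.
case: l => [//|y l] _ /=; elim: l => [|z l IH]; first by rewrite inE.
rewrite /= /Num.min; case: ifP => _; rewrite !inE ?eqxx ?orbT //.
by move: IH; rewrite inE => /orP [-> | ->]; rewrite ?orbT.
Qed.

Lemma rs_ge0 v sg : 0 <= rs pt v sg.
Proof.
apply: (big_ind (fun y => 0 <= y)) => // [x y x0 y0 | x _]; first by rewrite le_max x0.
exact: sqrtr_ge0.
Qed.

Lemma rs_le_rc v c sg : sg \in c -> rs pt v sg <= rc pt v c.
Proof. exact: le_bigmax_cond. Qed.

Lemma rc_le v c y : 0 <= y -> (forall sg, sg \in c -> rs pt v sg <= y) -> rc pt v c <= y.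
Proof. by move=> y0 c_le; apply/bigmax_leP. Qed.

Lemma rP_le v c : rP pt c <= rc pt v c.
Proof. by apply: minseq_le; apply/mapP; exists v; rewrite ?mem_enum. Qed.

End Radii.

Section MinimalBasis.
Variable R : realType.
Variable d : nat.
Variable V : finType.
Variable pt : V -> 'rV[R]_d.
Variable K : {set {set V}}.
Variable p : nat.
Variable ord : V -> seq {set V}.
Variable omega : seq (V * nat).
Hypothesis hK : is_complex K.
Hypothesis ord_valid : valid_orders pt K ord.
Hypothesis omega_valid : valid_omega pt p ord omega.
Local Notation B := (bnd_space K p).
Local Notation M := (Mcycles p K ord omega).
Local Notation cyc := (omcyc p ord).

Lemma omcyc_pcycle a : a \in omega -> pcycle K p (cyc a).
Proof.
case: omega_valid => _ om_mem _ _; rewrite om_mem => a_ess.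
have [ord_uniq ord_K _] := ord_valid a.1.
rewrite /omcyc; have [j jess ->] := nth_ess a_ess.
exact: (ess_pcycle hK ord_uniq ord_K jess).
Qed.

Lemma Mcycles_pcycle z : z \in M -> pcycle K p z.
Proof. by move=> /mem_buildM /mapP [a a_om ->]; exact: omcyc_pcycle. Qed.

Lemma Mcycles_prefix j : (j < size M)%N ->
  exists2 a, a \in omega & nth set0 M j = cyc a /\
    forall b, b \in omega -> (index b omega < index a omega)%N ->
      (chvec (cyc b) <= B + chain_span (take j M))%MS.
Proof.
case: omega_valid => om_uniq _ _ _.
move=> /buildM_prefix [q]; rewrite size_map => q_om [Mj before].
have [a0 _] : exists a0 : V * nat, True by case: omega q_om => [//|a0 l] _; exists a0.
have a_om : nth a0 omega q \in omega := mem_nth a0 q_om.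
exists (nth a0 omega q) => //; split; first by rewrite -Mj (nth_map a0).
move=> b b_om; rewrite index_uniq // => bq.
by have := before _ bq; rewrite (nth_map a0) ?index_mem // nth_index.
Qed.

(* The simplices of [V_j] occur before [tau] in [prec_v], which refines the order
   by distance to [v]. *)
Lemma ess_rc_le v (j : 'I_(size (ord v))) tau : tau \in K -> (j <= index tau (ord v))%N ->
  rc pt v (chain_of (Vk j)) <= rs pt v tau.
Proof.
move=> tauK j_tau; have [ord_uniq ord_K ord_mono] := ord_valid v.
apply: rc_le; first exact: rs_ge0.
move=> sg /imsetP [i iV ->]; rewrite leNgt; apply/negP => lt_rs.
have i_tau : (i <= index tau (ord v))%N.
  case: (reduced_col_red hK ord_uniq ord_K j) => _ V_le _ _.
  exact: leq_trans (V_le _ iV) j_tau.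
have := ord_mono tau _ tauK (sn_K ord_K i); rewrite lt_rs orbT => /(_ isT).
by rewrite index_sn // ltnNge i_tau.
Qed.

Lemma sub_of_rc_lt v e a m (T : 'M['F_2]_(m, #|{set V}|)) :
  pcycle K p e -> a \in omega -> rc pt v e < rc pt a.1 (cyc a) -> (B <= T)%MS ->
  (forall b, b \in omega -> (index b omega < index a omega)%N -> (chvec (cyc b) <= T)%MS) ->
  (chvec e <= T)%MS.
Proof.
move=> ec a_om lt_a BT beforeT.
have [-> | /set0Pn [sg0 sg0e]] := eqVneq e set0; first by rewrite chvec_set0 sub0mx.
case: omega_valid => _ om_mem om_ord _.
have [ord_uniq ord_K _] := ord_valid v.
have [tau tau_e tau_max] :=
  @arg_maxnP _ sg0 (fun x => x \in e) (fun x => index x (ord v)) sg0e.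
have tauK : tau \in K by move: (subsetP ec.1 _ tau_e); rewrite inE => /andP [].
apply: (sublevel_cycle_sub hK ord_uniq ord_K BT _ ec tau_max) => j jess j_tau.
set i := index j (ess_idx (ord v) p).
have vi_cyc : cyc (v, i) = chain_of (Vk j).
  by rewrite /omcyc /= essE (nth_map j) ?index_mem // nth_index.
have vi_om : (v, i) \in omega by rewrite om_mem /= essE size_map index_mem.
rewrite -vi_cyc; apply: beforeT => //; apply: om_ord => //.
rewrite vi_cyc /=; apply: le_lt_trans lt_a.
exact: le_trans (ess_rc_le tauK j_tau) (rs_le_rc pt v tau_e).
Qed.

Lemma rPcls_witness z : pcycle K p z -> z != set0 ->
  exists v, exists2 e, homologous K p z e & pcycle K p e /\ rc pt v e = rPcls pt K p z.
Proof.
move=> zc z0; set S := [set e | (e != set0) && homologous K p z e].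
have z_self : homologous K p z z.
  by apply/existsP; exists set0; rewrite pchain_set0 bnd_set0 symdd eqxx.
have [sg sgz] := set0Pn _ z0.
have [x _] : exists x, x \in sg.
  move: (subsetP zc.1 _ sgz); rewrite inE => /andP [_ /eqP sg_card].
  by apply/set0Pn; rewrite -card_gt0 sg_card.
have x_in : rc pt x z \in [seq rc pt v e | v <- enum V, e <- enum S].
  by apply: allpairs_f; rewrite mem_enum // inE z0.
have /minseq_mem : [seq rc pt v e | v <- enum V, e <- enum S] != [::].
  by apply: contraTneq x_in => ->.
rewrite -/(rPcls pt K p z) => /allpairsP [[v e] /= [_ + ->]].
rewrite mem_enum inE => /andP [_ ze]; exists v, e => //; split=> //.
have /existsP [c /andP [cp /eqP bc]] := ze.
have -> : e = symd z (bnd c) by rewrite bc symdA symdd sym0d.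
exact: pcycle_symd zc (bnd_pcycle hK cp).
Qed.

Lemma class_sub_of_rPcls_lt z a m (T : 'M['F_2]_(m, #|{set V}|)) :
  pcycle K p z -> a \in omega -> rPcls pt K p z < rc pt a.1 (cyc a) -> (B <= T)%MS ->
  (forall b, b \in omega -> (index b omega < index a omega)%N -> (chvec (cyc b) <= T)%MS) ->
  (chvec z <= T)%MS.
Proof.
move=> zc a_om lt_a BT beforeT.
have [-> | z0] := eqVneq z set0; first by rewrite chvec_set0 sub0mx.
have [v [e ze [ec rc_e]]] := rPcls_witness zc z0.
apply: (homologous_sub ze BT); apply: (@sub_of_rc_lt v e a _ _ ec a_om _ BT beforeT).
by rewrite rc_e.
Qed.

End MinimalBasis.

Theorem mainTheorem4 (R : realType) (d : nat) (V : finType) (pt : V -> 'rV[R]_d)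
  (K : {set {set V}}) (p : nat) (ord : V -> seq {set V}) (omega : seq (V * nat)) :
  injective pt -> is_complex K -> (0 < p)%N ->
  valid_orders pt K ord -> valid_omega pt p ord omega ->
  forall zeta' : seq {set {set V}},
    size zeta' = size (Mcycles p K ord omega) ->
    (forall z, z \in zeta' -> pcycle K p z) ->
    (forall z, pcycle K p z -> in_span K p z zeta') ->
    (forall i j, (i < size zeta')%N -> (j < size zeta')%N ->
       rPcls pt K p (nth set0 zeta' i) < rPcls pt K p (nth set0 zeta' j) -> (i < j)%N) ->
    forall j, (j < size zeta')%N ->
      rP pt (nth set0 (Mcycles p K ord omega) j) <= rPcls pt K p (nth set0 zeta' j).
Proof.
move=> _ hK _ ord_valid omega_valid zeta' size_zeta' zeta'_cyc zeta'_span zeta'_sorted j jz.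
rewrite leNgt; apply/negP => lt_j.
have jM : (j < size (Mcycles p K ord omega))%N by rewrite -size_zeta'.
have [a a_om [Mj a_before]] := Mcycles_prefix omega_valid jM.
rewrite Mj in lt_j; have lt_a := lt_le_trans lt_j (rP_le pt a.1 _).
have M_sub : (chain_span (Mcycles p K ord omega) <= bnd_space K p + chain_span zeta')%MS.
  apply: chain_span_sub => z /(Mcycles_pcycle hK ord_valid omega_valid) /zeta'_span.
  by rewrite in_spanE.
move/negP: (take_span_not_sub (@buildM_independent _ K p _) size_zeta' M_sub jM); apply.
rewrite addsmx_sub addsmxSl; apply: chain_span_sub => z /(nthP set0) [k].
rewrite size_takel // => kj <-; rewrite nth_take //.
have kz : (k < size zeta')%N := leq_trans kj jz.
apply: (class_sub_of_rPcls_lt hK ord_valid omega_valid _ a_om _ (addsmxSl _ _) a_before).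
  by apply: zeta'_cyc; rewrite mem_nth.
apply: le_lt_trans lt_a; rewrite leNgt; apply/negP => /(zeta'_sorted _ _ jz kz).
by rewrite ltnNge -ltnS kj.
Qed.
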